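(* Let $p\in\mathbb{N}_0$, let $n\ge p+1$ be an integer, let $\eta>0$ and write $x=\cosh\eta$. Then \[ \sum_{k=-p}^{p}\frac{(-1)^{k+1}e^{k\eta}R_p^k(x)}{n-k}=(-1)^{p+1}p!\,(n-p-1)!\,e^{n\eta}\sinh^p\eta\,P_p^{-n}(\coth\eta). \]
   Context: For $z>1$ and integers $p\ge0$, $n\ge1$, $P_p^{-n}(z)=\frac{1}{n!}\left(\frac{z-1}{z+1}\right)^{n/2}{}_2F_1\!\left(-p,p+1;1+n;\frac{1-z}{2}\right)$ (associated Legendre function of the first kind). The logarithmic polynomials $R_p^k(x)$, $p\in\mathbb{N}_0$, $k\in\mathbb{Z}$, are defined by $R_0^0(x)=1$, $R_0^k(x)=0$ for $k\ne0$, and $R_p^k(x)=\tfrac12 R_{p-1}^{k-1}(x)+xR_{p-1}^k(x)+\tfrac12 R_{p-1}^{k+1}(x)$ for $p\ge1$. *)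

From Stdlib Require Import Reals ZArith.
From Coquelicot Require Import Coquelicot.
Open Scope R_scope.

Fixpoint poch (a : R) (j : nat) : R :=
  match j with
  | O => 1
  | S i => poch a i * (a + INR i)
  end.

Definition hyp2F1 (a b c w : R) : R :=
  Series (fun j => poch a j * poch b j / (poch c j * INR (fact j)) * w ^ j).

Definition legP_neg (p n : nat) (z : R) : R :=
  / INR (fact n) * Rpower ((z - 1) / (z + 1)) (INR n / 2)
  * hyp2F1 (- INR p) (INR p + 1) (1 + INR n) ((1 - z) / 2).

Fixpoint logR (p : nat) (x : R) (k : Z) : R :=
  match p with
  | O => if Z.eqb k 0 then 1 else 0
  | S q => / 2 * logR q x (k - 1) + x * logR q x k + / 2 * logR q x (k + 1)
  end.

From Stdlib Require Import Reals ZArith Lia Lra.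
From Coquelicot Require Import Coquelicot.
Open Scope R_scope.

(* Put u = e^eta.  The R_p^k(x) are the coefficients of the Laurent polynomial
   (t/2 + x + 1/(2t))^p.  Writing 1/(n-k) = int_0^1 s^(n-1-k) ds, the left-hand
   side becomes -int_0^1 s^(n-1-p) ((1-s)(s-u^2)/(2u))^p ds; a binomial expansion
   and Beta integrals turn it into a finite sum, which matches termwise the
   terminating hypergeometric series of P_p^{-n}(coth eta), whose argument
   (1 - coth eta)/2 is 1/(1-u^2). *)

Definition sum_Z (f : Z -> R) (a : Z) (N : nat) : R :=
  sum_f_R0 (fun j => f (a + Z.of_nat j)%Z) N.

Lemma sum_Z_ext f g a N :
  (forall k, (a <= k <= a + Z.of_nat N)%Z -> f k = g k) ->
  sum_Z f a N = sum_Z g a N.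
Proof. intros H; apply sum_eq; intros i Hi; apply H; lia. Qed.

Lemma sum_Z_recl f a N : sum_Z f a (S N) = f a + sum_Z f (a + 1) N.
Proof.
  unfold sum_Z; induction N as [|N IH]; simpl.
  - rewrite !Z.add_0_r; reflexivity.
  - simpl in IH; rewrite IH, Rplus_assoc; do 3 f_equal; lia.
Qed.

Lemma sum_Z_recr f a N : sum_Z f a (S N) = sum_Z f a N + f (a + Z.of_nat (S N))%Z.
Proof. reflexivity. Qed.

Lemma sum_Z_shift f d a N : sum_Z (fun k => f (k + d)%Z) a N = sum_Z f (a + d) N.
Proof. apply sum_eq; intros i _; f_equal; lia. Qed.

Lemma sum_Z_plus f g a N : sum_Z (fun k => f k + g k) a N = sum_Z f a N + sum_Z g a N.
Proof. apply plus_sum. Qed.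

Lemma sum_Z_scal c f a N : sum_Z (fun k => c * f k) a N = c * sum_Z f a N.
Proof. unfold sum_Z; rewrite scal_sum; apply sum_eq; intros; ring. Qed.

Lemma is_RInt_sum_f_R0 (F : nat -> R -> R) (I : nat -> R) a b N :
  (forall j, (j <= N)%nat -> is_RInt (F j) a b (I j)) ->
  is_RInt (fun s => sum_f_R0 (fun j => F j s) N) a b (sum_f_R0 I N).
Proof.
  induction N as [|N IH]; intros H; simpl.
  - apply H; lia.
  - apply (is_RInt_plus (fun s => sum_f_R0 (fun j => F j s) N) (F (S N)));
      [apply IH; intros | ]; apply H; lia.
Qed.

Lemma is_RInt_pow_01 m : is_RInt (fun s => s ^ m) 0 1 (/ INR (S m)).
Proof.
  replace (/ INR (S m)) with (1 ^ S m / INR (S m) - 0 ^ S m / INR (S m)).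
  - apply is_RInt_pow.
  - rewrite pow1, pow_i by lia; field; apply not_0_INR; lia.
Qed.

Lemma is_RInt_beta a b : is_RInt (fun s => s ^ a * (1 - s) ^ b) 0 1
  (INR (fact a) * INR (fact b) / INR (fact (a + b + 1))).
Proof.
  revert a; induction b as [|b IH]; intros a.
  - replace (a + 0 + 1)%nat with (S a) by lia.
    rewrite fact_simpl, mult_INR; change (INR (fact 0)) with 1.
    replace (INR (fact a) * 1 / (INR (S a) * INR (fact a))) with (/ INR (S a)).
    + apply (is_RInt_ext (fun s => s ^ a)); [intros; simpl; ring | apply is_RInt_pow_01].
    + field; split; [apply INR_fact_neq_0 | apply not_0_INR; lia].
  - replace (INR (fact a) * INR (fact (S b)) / INR (fact (a + S b + 1))) with
      (INR (fact a) * INR (fact b) / INR (fact (a + b + 1))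
       - INR (fact (S a)) * INR (fact b) / INR (fact (S a + b + 1))).
    + apply (is_RInt_ext (fun s => s ^ a * (1 - s) ^ b - s ^ S a * (1 - s) ^ b)).
      { intros s _; simpl; ring. }
      exact (is_RInt_minus _ _ _ _ _ _ (IH a) (IH (S a))).
    + replace (S a + b + 1)%nat with (S (a + b + 1)) by lia.
      replace (a + S b + 1)%nat with (S (a + b + 1)) by lia.
      rewrite !fact_simpl, !mult_INR, !S_INR, !plus_INR.
      pose proof (INR_fact_lt_0 (a + b + 1)); pose proof (pos_INR a); pose proof (pos_INR b).
      simpl; field; lra.
Qed.

Lemma logR_outside p x k : (Z.of_nat p < Z.abs k)%Z -> logR p x k = 0.
Proof.
  revert k; induction p as [|p IH]; intros k Hk; simpl.
  - destruct (Z.eqb_spec k 0); [lia | reflexivity].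
  - rewrite !IH by lia; ring.
Qed.

(* The defining recursion of [logR] is multiplication of the Laurent
   polynomial [sum_k logR p x k t^k] by [t/2 + x + 1/(2t)]. *)
Lemma sum_logR_powerRZ p x t : t <> 0 ->
  sum_Z (fun k => logR p x k * powerRZ t k) (- Z.of_nat p) (2 * p)
  = (/ 2 * t + x + / 2 * / t) ^ p.
Proof.
  intros Ht; induction p as [|p IH]; [unfold sum_Z; simpl; ring|].
  set (g k := logR p x k * powerRZ t k).
  assert (g_outside : forall k, (Z.of_nat p < Z.abs k)%Z -> g k = 0).
  { intros k Hk; unfold g; rewrite logR_outside by lia; ring. }
  transitivity (sum_Z (fun k => / 2 * t * g (k + -1)%Z + (x * g k + / 2 * / t * g (k + 1)%Z))
                  (- Z.of_nat (S p)) (2 * S p)).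
  { apply sum_Z_ext; intros k _; unfold g; simpl logR.
    replace (k - 1)%Z with (k + -1)%Z by lia.
    rewrite !powerRZ_add by exact Ht; simpl; field; exact Ht. }
  rewrite !sum_Z_plus, !sum_Z_scal, !sum_Z_shift.
  replace (2 * S p)%nat with (S (S (2 * p))) by lia.
  rewrite (sum_Z_recl g), sum_Z_recl, (sum_Z_recl g), sum_Z_recr,
    (sum_Z_recr g (- Z.of_nat (S p) + 1)), sum_Z_recr, !g_outside by lia.
  replace (- Z.of_nat (S p) + -1 + 1 + 1)%Z with (- Z.of_nat p)%Z by lia.
  replace (- Z.of_nat (S p) + 1)%Z with (- Z.of_nat p)%Z by lia.
  unfold g; rewrite IH; simpl; field; exact Ht.
Qed.

(* With [x = (u + 1/u)/2] the Laurent polynomial of [sum_logR_powerRZ]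
   factors at [t = -u/s]. *)
Lemma sum_logR_integrand p n u s : (p + 1 <= n)%nat -> u <> 0 -> s <> 0 ->
  sum_Z (fun k => logR p ((u + / u) / 2) k * powerRZ (- u) k
                  * s ^ Z.to_nat (Z.of_nat n - 1 - k)) (- Z.of_nat p) (2 * p)
  = s ^ (n - 1 - p) * ((1 - s) * (s - u * u) / (2 * u)) ^ p.
Proof.
  intros Hn Hu Hs.
  transitivity (sum_Z (fun k => s ^ (n - 1) * (logR p ((u + / u) / 2) k * powerRZ (- u / s) k))
                  (- Z.of_nat p) (2 * p)).
  { apply sum_Z_ext; intros k Hk.
    unfold Rdiv; rewrite powerRZ_mult, powerRZ_inv', !pow_powerRZ, Z2Nat.id by lia.
    replace (Z.of_nat (n - 1)) with (Z.of_nat n - 1 - k + k)%Z by lia.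
    rewrite powerRZ_add by exact Hs.
    assert (powerRZ s k <> 0) by (apply powerRZ_NOR; exact Hs).
    field; auto. }
  rewrite sum_Z_scal, sum_logR_powerRZ.
  2: { unfold Rdiv; apply Rmult_integral_contrapositive; split;
       [lra | apply Rinv_neq_0_compat; exact Hs]. }
  replace (/ 2 * (- u / s) + (u + / u) / 2 + / 2 * / (- u / s))
    with (/ s * ((1 - s) * (s - u * u) / (2 * u))) by (field; auto).
  replace (n - 1)%nat with (n - 1 - p + p)%nat at 1 by lia.
  rewrite Rpow_mult_distr, pow_inv, pow_add; field; apply pow_nonzero, Hs.
Qed.

Lemma pow_beta_integrand_binomial p a c v s : c <> 0 ->
  s ^ a * ((1 - s) * (s - v) / c) ^ p
  = (/ c) ^ p * sum_f_R0 (fun i => Binomial.C p i * (-1) ^ i * (1 - v) ^ (p - i)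
                                  * (s ^ a * (1 - s) ^ (p + i))) p.
Proof.
  intros Hc.
  replace ((1 - s) * (s - v) / c) with ((1 - s) * ((-1) * (1 - s) + (1 - v)) * / c)
    by (field; exact Hc).
  rewrite !Rpow_mult_distr, binomial, Rmult_comm, Rmult_assoc, Rmult_comm, Rmult_assoc.
  f_equal; rewrite !scal_sum; apply sum_eq; intros i _.
  rewrite Rpow_mult_distr, pow_add; ring.
Qed.

Lemma sum_logR_div p n u : (p + 1 <= n)%nat -> u <> 0 ->
  sum_Z (fun k => logR p ((u + / u) / 2) k * powerRZ (- u) k / IZR (Z.of_nat n - k))
        (- Z.of_nat p) (2 * p)
  = (/ (2 * u)) ^ p * sum_f_R0 (fun i => Binomial.C p i * (-1) ^ i * (1 - u * u) ^ (p - i)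
        * (INR (fact (n - 1 - p)) * INR (fact (p + i)) / INR (fact (n + i)))) p.
Proof.
  intros Hn Hu.
  set (F s := sum_Z (fun k => logR p ((u + / u) / 2) k * powerRZ (- u) k
                              * s ^ Z.to_nat (Z.of_nat n - 1 - k)) (- Z.of_nat p) (2 * p)).
  transitivity (RInt F 0 1); [symmetry |]; apply is_RInt_unique.
  - apply is_RInt_sum_f_R0; intros j Hj.
    set (k := (- Z.of_nat p + Z.of_nat j)%Z).
    replace (Z.of_nat n - k)%Z with (Z.of_nat (S (Z.to_nat (Z.of_nat n - 1 - k)))) by lia.
    rewrite <- INR_IZR_INZ.
    apply (is_RInt_scal (fun s => s ^ _)), is_RInt_pow_01.
  - apply (is_RInt_ext (fun s => (/ (2 * u)) ^ p * sum_f_R0 (fun i => Binomial.C p i * (-1) ^ i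
              * (1 - u * u) ^ (p - i) * (s ^ (n - 1 - p) * (1 - s) ^ (p + i))) p)).
    { intros s Hs; rewrite Rmin_left, Rmax_right in Hs by lra.
      unfold F; rewrite sum_logR_integrand by (lia || lra).
      symmetry; apply pow_beta_integrand_binomial; lra. }
    apply (is_RInt_scal (V := R_CompleteNormedModule)), is_RInt_sum_f_R0; intros i _.
    apply (is_RInt_scal (V := R_CompleteNormedModule)).
    replace (n + i)%nat with (n - 1 - p + (p + i) + 1)%nat by lia.
    apply is_RInt_beta.
Qed.

Lemma poch_neg_nat_eq0 p j : (p < j)%nat -> poch (- INR p) j = 0.
Proof.
  induction j as [|j IH]; intros Hj; [lia |]; simpl.
  destruct (Nat.eq_dec j p) as [-> | Hne]; [ring | rewrite IH by lia; ring].
Qed.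

Lemma poch_neg_nat p j : (j <= p)%nat ->
  poch (- INR p) j = (-1) ^ j * INR (fact p) / INR (fact (p - j)).
Proof.
  induction j as [|j IH]; intros Hj.
  - rewrite Nat.sub_0_r; simpl; field; apply INR_fact_neq_0.
  - simpl poch; rewrite IH by lia.
    replace (p - j)%nat with (S (p - S j)) by lia.
    rewrite fact_simpl, mult_INR, S_INR, minus_INR by lia.
    pose proof (INR_fact_neq_0 (p - S j)).
    assert (INR j < INR p) by (apply lt_INR; lia).
    rewrite S_INR; simpl; field; lra.
Qed.

Lemma poch_nat_succ a j : poch (INR a + 1) j = INR (fact (a + j)) / INR (fact a).
Proof.
  induction j as [|j IH]; simpl poch.
  - rewrite Nat.add_0_r; field; apply INR_fact_neq_0.
  - rewrite IH, Nat.add_succ_r, fact_simpl, mult_INR, S_INR, plus_INR.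
    field; apply INR_fact_neq_0.
Qed.

Lemma Series_finite (a : nat -> R) N : (forall j, (N < j)%nat -> a j = 0) ->
  Series a = sum_f_R0 a N.
Proof.
  intros Ha; apply is_series_unique.
  apply (filterlim_ext_loc (fun _ => sum_f_R0 a N)); [| apply filterlim_const].
  exists N; intros M HM; rewrite sum_n_Reals.
  induction HM as [| M HM IH]; [reflexivity |].
  simpl; rewrite Ha, IH by lia; ring.
Qed.

Lemma hyp2F1_neg_nat p b c w : hyp2F1 (- INR p) b c w
  = sum_f_R0 (fun j => poch (- INR p) j * poch b j / (poch c j * INR (fact j)) * w ^ j) p.
Proof.
  apply Series_finite; intros j Hj.
  rewrite poch_neg_nat_eq0 by exact Hj; unfold Rdiv; ring.
Qed.

(* With [u = e^eta]: [(z-1)/(z+1) = u^-2] and [(1-z)/2 = 1/(1-u^2)] at [z = coth eta]. *)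
Lemma legP_neg_coth p n eta : 0 < eta ->
  legP_neg p n (cosh eta / sinh eta)
  = / exp (INR n * eta) * sum_f_R0 (fun j => Binomial.C p j * (-1) ^ j
        * INR (fact (p + j)) / (INR (fact p) * INR (fact (n + j)))
        * (/ (1 - exp eta * exp eta)) ^ j) p.
Proof.
  intros Heta.
  set (u := exp eta).
  assert (Hu : 1 < u) by (unfold u; rewrite <- exp_0; apply exp_increasing, Heta).
  assert (Hcoth : cosh eta / sinh eta = (u * u + 1) / (u * u - 1)).
  { unfold cosh, sinh; rewrite exp_Ropp; fold u; field; split; nra. }
  assert (Hratio : (cosh eta / sinh eta - 1) / (cosh eta / sinh eta + 1) = exp (- (2 * eta))).
  { rewrite Hcoth, exp_Ropp, <- (Rplus_diag eta), exp_plus; fold u; field; nra. }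
  unfold legP_neg; rewrite Hratio, hyp2F1_neg_nat.
  unfold Rpower; rewrite ln_exp, <- exp_Ropp.
  replace (INR n / 2 * - (2 * eta)) with (- (INR n * eta)) by field.
  rewrite exp_Ropp, !scal_sum; apply sum_eq; intros j Hj.
  rewrite poch_neg_nat, poch_nat_succ, Rplus_comm, poch_nat_succ by lia.
  replace ((1 - cosh eta / sinh eta) / 2) with (/ (1 - u * u)) by (rewrite Hcoth; field; nra).
  unfold Binomial.C.
  pose proof (INR_fact_neq_0 p); pose proof (INR_fact_neq_0 n); pose proof (INR_fact_neq_0 j);
  pose proof (INR_fact_neq_0 (p - j)); pose proof (INR_fact_neq_0 (n + j)).
  pose proof (exp_pos (INR n * eta)).
  field; repeat split; auto; lra.
Qed.

Lemma exp_IZR_mul k e : exp (IZR k * e) = powerRZ (exp e) k.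
Proof. rewrite powerRZ_Rpower by apply exp_pos; unfold Rpower; rewrite ln_exp; reflexivity. Qed.

Lemma sum_exp_logR_div p n eta :
  sum_f_R0 (fun j =>
      let k := (Z.of_nat j - Z.of_nat p)%Z in
      powerRZ (-1) (k + 1) * exp (IZR k * eta) * logR p (cosh eta) k / (INR n - IZR k))
    (2 * p)
  = - sum_Z (fun k => logR p ((exp eta + / exp eta) / 2) k * powerRZ (- exp eta) k
                      / IZR (Z.of_nat n - k)) (- Z.of_nat p) (2 * p).
Proof.
  replace (cosh eta) with ((exp eta + / exp eta) / 2) by (unfold cosh; rewrite exp_Ropp; reflexivity).
  rewrite <- (Rmult_1_l (sum_Z _ _ _)), Ropp_mult_distr_l, <- sum_Z_scal.
  apply sum_eq; intros j _; cbv zeta.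
  replace (Z.of_nat j - Z.of_nat p)%Z with (- Z.of_nat p + Z.of_nat j)%Z by lia.
  set (k := (- Z.of_nat p + Z.of_nat j)%Z).
  rewrite exp_IZR_mul, powerRZ_add by lra.
  replace (- exp eta) with (-1 * exp eta) by ring.
  rewrite powerRZ_mult, minus_IZR, <- INR_IZR_INZ; simpl; unfold Rdiv; ring.
Qed.

Lemma neg1_pow_succ_mul_pow p : (-1) ^ (p + 1) * (-1) ^ p = -1.
Proof.
  rewrite pow_add, Rmult_comm, <- Rmult_assoc, <- Rpow_mult_distr.
  replace (-1 * -1) with 1 by ring; rewrite pow1; ring.
Qed.

Lemma beta_sum_eq_hypergeometric_sum p n u : (p + 1 <= n)%nat -> u <> 0 -> 1 - u * u <> 0 ->
  - ((/ (2 * u)) ^ p * sum_f_R0 (fun i => Binomial.C p i * (-1) ^ i * (1 - u * u) ^ (p - i)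
        * (INR (fact (n - 1 - p)) * INR (fact (p + i)) / INR (fact (n + i)))) p)
  = (-1) ^ (p + 1) * INR (fact p) * INR (fact (n - p - 1)) * ((u - / u) / 2) ^ p
    * sum_f_R0 (fun j => Binomial.C p j * (-1) ^ j
        * INR (fact (p + j)) / (INR (fact p) * INR (fact (n + j)))
        * (/ (1 - u * u)) ^ j) p.
Proof.
  intros Hn Hu Hw.
  replace ((u - / u) / 2) with (-1 * ((1 - u * u) * / (2 * u))) by (field; exact Hu).
  rewrite Rpow_mult_distr.
  replace ((-1) ^ (p + 1) * INR (fact p) * INR (fact (n - p - 1))
           * ((-1) ^ p * ((1 - u * u) * / (2 * u)) ^ p))
    with ((-1) ^ (p + 1) * (-1) ^ p * INR (fact p) * INR (fact (n - p - 1))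
          * ((1 - u * u) * / (2 * u)) ^ p) by ring.
  rewrite neg1_pow_succ_mul_pow, Ropp_mult_distr_l, !scal_sum.
  apply sum_eq; intros i Hi.
  replace (n - p - 1)%nat with (n - 1 - p)%nat by lia.
  rewrite Rpow_mult_distr, (pow_RN_plus (1 - u * u) (p - i) i), !pow_inv by exact Hw.
  replace (p - i + i)%nat with p by lia.
  pose proof (INR_fact_neq_0 p); pose proof (INR_fact_neq_0 (n + i)).
  assert ((1 - u * u) ^ i <> 0) by (apply pow_nonzero, Hw).
  assert ((2 * u) ^ p <> 0) by (apply pow_nonzero; lra).
  field; auto.
Qed.

Theorem mainTheorem5 (p n : nat) (eta : R) :
  (p + 1 <= n)%nat -> 0 < eta ->
  let x := cosh eta in
  sum_f_R0 (fun j =>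
      let k := (Z.of_nat j - Z.of_nat p)%Z in
      powerRZ (-1) (k + 1) * exp (IZR k * eta) * logR p x k / (INR n - IZR k))
    (2 * p)
  = (-1) ^ (p + 1) * INR (fact p) * INR (fact (n - p - 1)) * exp (INR n * eta)
    * sinh eta ^ p * legP_neg p n (cosh eta / sinh eta).
Proof.
  intros Hn Heta x.
  assert (Hu : 1 < exp eta) by (rewrite <- exp_0; apply exp_increasing, Heta).
  rewrite sum_exp_logR_div, sum_logR_div, beta_sum_eq_hypergeometric_sum,
    legP_neg_coth by (lia || lra || nra).
  replace (sinh eta) with ((exp eta - / exp eta) / 2)
    by (unfold sinh; rewrite exp_Ropp; reflexivity).
  pose proof (exp_pos (INR n * eta)).
  field; lra.
Qed.
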